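(* Assume that $I\subset J\hat{J}$. Then the natural reduction homomorphism $\pi_I:\Gamma(J,\hat{J})\to\overline{\Gamma}_I(J,\hat{J})$ is surjective.
   Context: $F$ is a totally real number field with ring of integers $R$; $J,\hat J\subset F$ are fractional ideals with $J\hat J\subset R$, and $I\subset R$ is a non-zero ideal. $\Gamma(J,\hat J)$ is the group of matrices $\begin{pmatrix} a_{11} & a_{12}\\ a_{21} & a_{22}\end{pmatrix}\in\operatorname{SL}_2(F)$ with $a_{11},a_{22}\in R$, $a_{12}\in J$, $a_{21}\in\hat J$. $\overline{\Gamma}_I(J,\hat J)$ is the group of matrices $\begin{pmatrix} \bar a_{11} & \bar a_{12}\\ \bar a_{21} & \bar a_{22}\end{pmatrix}$ with $\bar a_{11},\bar a_{22}\in R/I$, $\bar a_{12}\in J/IJ$, $\bar a_{21}\in\hat J/I\hat J$ and $\bar a_{11}\bar a_{22}-\bar a_{12}\bar a_{21}=1$ (using the map $J/IJ\otimes\hat J/I\hat J\to R/I$ induced by multiplication). *)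

From HB Require Import structures.
From mathcomp Require Import all_boot all_order all_algebra all_field.
Set Implicit Arguments. Unset Strict Implicit. Unset Printing Implicit Defensive.
Import Order.TTheory GRing.Theory Num.Theory.
Local Open Scope ring_scope.

Section NumberField.
Variable F : fieldExtType rat.

Definition totally_real : Prop :=
  forall (s : {rmorphism F -> algC}) (x : F), s x \is Num.real.

Definition intF (x : F) : Prop := integralOver (fun z : int => z%:~R : F) x.

Definition Rsubmodule (J : F -> Prop) : Prop :=
  [/\ J 0, (forall x y, J x -> J y -> J (x + y)) &
      (forall r x, intF r -> J x -> J (r * x))].

Definition frac_ideal (J : F -> Prop) : Prop :=
  [/\ Rsubmodule J, (exists x, J x /\ x != 0) &
      (exists d, [/\ intF d, d != 0 & forall x, J x -> intF (d * x)])].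

Definition nz_ideal (I : F -> Prop) : Prop :=
  frac_ideal I /\ (forall x, I x -> intF x).

Definition prod_ideal (I J : F -> Prop) (x : F) : Prop :=
  exists s : seq (F * F),
    (forall p, p \in s -> I p.1 /\ J p.2) /\ x = \sum_(p <- s) p.1 * p.2.

Definition subset_ideal (I J : F -> Prop) : Prop := forall x, I x -> J x.

Definition Gamma (J Jh : F -> Prop) (A : 'M[F]_2) : Prop :=
  [/\ \det A = 1, intF (A 0 0), intF (A 1 1), J (A 0 1) & Jh (A 1 0)].

(* Elements of Gammabar_I(J, Jh) are represented by lifts B: matrices with
   b11, b22 in R, b12 in J, b21 in Jh, such that b11 b22 - b12 b21 = 1 in R/I. *)
Definition Gammabar_lift (I J Jh : F -> Prop) (B : 'M[F]_2) : Prop :=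
  [/\ intF (B 0 0), intF (B 1 1), J (B 0 1), Jh (B 1 0) &
      I (B 0 0 * B 1 1 - B 0 1 * B 1 0 - 1)].

(* pi_I(A) equals the class of the lift B: entrywise congruences modulo
   I, IJ, I Jh, I. *)
Definition reduces_to (I J Jh : F -> Prop) (A B : 'M[F]_2) : Prop :=
  [/\ I (A 0 0 - B 0 0), I (A 1 1 - B 1 1),
      prod_ideal I J (A 0 1 - B 0 1) & prod_ideal I Jh (A 1 0 - B 1 0)].

End NumberField.

(* Replacing the upper-right entry b by an element of b + IJ, we may assume b <> 0; then
   the ideal bĴ of R contains a positive integer N, and the pigeonhole principle on
   R/NR makes some power E = a^K idempotent modulo bĴ.  Put g = ad - bc - 1 in I and
   a' = a - g(1 - E).  Modulo bĴ, a is a unit on the E-part, while on the (1 - E)-part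
   a is nilpotent and a' = 1 + a(1 - d) is a unit; so a' v - b h = 1 for some v in R
   and h in Ĵ.  The matrix with first row (a', b) whose second row is corrected by a
   multiple of it then lies in Γ(J, Ĵ) and reduces to the given class. *)

From HB Require Import structures.
From mathcomp Require Import all_boot all_order all_algebra all_field.
From mathcomp Require Import ring zify.
Import GRing.Theory Num.Theory.
Set Implicit Arguments. Unset Strict Implicit. Unset Printing Implicit Defensive.
Local Open Scope ring_scope.

Section TwoByTwo.
Variable R : comPzRingType.

Definition mx22 (x y z w : R) : 'M[R]_2 :=
  \matrix_(i, j) if i == 0 then if j == 0 then x else y
                 else if j == 0 then z else w.

Lemma det_mx22 x y z w : \det (mx22 x y z w) = x * w - y * z.
Proof.
rewrite (expand_det_row _ 0) !big_ord_recl big_ord0 /cofactor !det_mx11 !mxE /=.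
by rewrite /bump /=; ring.
Qed.

(* [e] is idempotent modulo [b]; [a] has inverse [p] on [e] and [1 + a(1 - d)] has inverse
   [w] on [1 - e], so [a - g(1 - e)] has inverse [p e + (1 - e) w]. *)
Lemma idempotent_unit_identity (a b c d e p q w t : R) :
    e = a * p -> e - e ^+ 2 = b * t -> (1 + a * (1 - d)) * w = 1 - e * q ->
  let g := a * d - b * c - 1 in
  (a - g * (1 - e)) * (p * e + (1 - e) * w)
    - b * (t * (- 1 - g * p - q + w * g) + c * ((1 - e) * w)) = 1.
Proof.
move=> eE Ee hw g; apply/eqP; rewrite -subr_eq0; apply/eqP.
transitivity ((e - e ^+ 2 - b * t) * (- 1 - g * p - q + w * g)
              + (1 - e) * ((1 + a * (1 - d)) * w - (1 - e * q))).
  by rewrite /g eE; ring.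
by rewrite Ee hw !subrr mul0r mulr0 addr0.
Qed.

Lemma unimodular_row_completion (a b c d v h : R) : a * v - b * h = 1 ->
  let y := h * d - v * c in let g := a * d - b * c - 1 in
  [/\ a * (v - b * y) - b * (h - a * y) = 1,
      v - b * y - d = - (v * g) & h - a * y - c = - g * h].
Proof.
move=> avbh y g; split.
- by rewrite -avbh /y; ring.
- apply/eqP; rewrite -subr_eq0; apply/eqP.
  by transitivity (d * (a * v - b * h - 1)); [rewrite /y /g; ring | rewrite avbh subrr mulr0].
- apply/eqP; rewrite -subr_eq0; apply/eqP.
  by transitivity (c * (a * v - b * h - 1)); [rewrite /y /g; ring | rewrite avbh subrr mulr0].
Qed.

End TwoByTwo.

Section IntegralElements.
Variable F : fieldExtType rat.
Implicit Types x y : F.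

Local Notation iF := (intr : int -> F).

Lemma intF0 : intF (0 : F). Proof. exact: (@integral0 _ _ iF). Qed.
Lemma intF1 : intF (1 : F). Proof. exact: (@integral1 _ _ iF). Qed.
Lemma intF_intr (z : int) : intF (z%:~R : F). Proof. exact: (@integral_id _ _ iF). Qed.
Lemma intFN x : intF x -> intF (- x). Proof. exact: (@integral_opp _ _ iF). Qed.
Lemma intFD x y : intF x -> intF y -> intF (x + y). Proof. exact: (@integral_add _ _ iF). Qed.
Lemma intFB x y : intF x -> intF y -> intF (x - y). Proof. exact: (@integral_sub _ _ iF). Qed.
Lemma intFM x y : intF x -> intF y -> intF (x * y). Proof. exact: (@integral_mul _ _ iF). Qed.

Lemma intFX x n : intF x -> intF (x ^+ n).
Proof.
by move=> hx; elim: n => [|n IHn]; [rewrite expr0; apply: intF1 | rewrite exprS; apply: intFM].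
Qed.

Lemma intF_sum (I : Type) (r : seq I) (P : pred I) (G : I -> F) :
  (forall i, P i -> intF (G i)) -> intF (\sum_(i <- r | P i) G i).
Proof. by move=> hG; elim/big_ind: _ => //; [apply: intF0 | apply: intFD]. Qed.

Lemma intF_horner (q : {poly int}) x : intF x -> intF (map_poly iF q).[x].
Proof.
move=> hx; apply: (@integral_horner _ _ iF) => // _ /(nthP 0)[i _ <-].
by rewrite coef_map; apply: intF_intr.
Qed.

End IntegralElements.

Section Submodules.
Variables (F : fieldExtType rat) (J : F -> Prop).
Hypothesis smJ : Rsubmodule J.

Lemma submod0 : J 0. Proof. by case: smJ. Qed.
Lemma submodD x y : J x -> J y -> J (x + y). Proof. by case: smJ => _ + _; apply. Qed.
Lemma submodMl r x : intF r -> J x -> J (r * x). Proof. by case: smJ => _ _; apply. Qed.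
Lemma submodMr r x : intF r -> J x -> J (x * r).
Proof. by rewrite mulrC; apply: submodMl. Qed.
Lemma submodN x : J x -> J (- x).
Proof. by rewrite -mulN1r; apply/submodMl/intFN/intF1. Qed.
Lemma submodB x y : J x -> J y -> J (x - y).
Proof. by move=> Jx /submodN; apply: submodD. Qed.

End Submodules.

Section PrincipalIdeals.
Variable F : fieldExtType rat.
Local Notation iF := (intr : int -> F).

Definition dvdR (m x : F) : Prop := exists2 z, intF z & x = m * z.

Lemma dvdR_submod m : Rsubmodule (dvdR m).
Proof.
split.
- by exists 0; [apply: intF0 | rewrite mulr0].
- by move=> _ _ [z hz ->] [w hw ->]; exists (z + w); [apply: intFD | rewrite mulrDr].
- by move=> r _ hr [z hz ->]; exists (r * z); [apply: intFM | rewrite mulrCA].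
Qed.

Lemma prod_idealM (I J : F -> Prop) x y : I x -> J y -> prod_ideal I J (x * y).
Proof.
move=> Ix Jy; exists [:: (x, y)]; split; last by rewrite big_seq1.
by move=> q; rewrite inE => /eqP ->.
Qed.

Lemma prod_ideal0 (I J : F -> Prop) : prod_ideal I J 0.
Proof. by exists [::]; rewrite big_nil. Qed.

Lemma dvdR_nat_of_neq0 m : m != 0 -> intF m -> exists n, dvdR m n.+1%:R.
Proof.
move=> m0 hm; case: (hm) => p p_monic pm0.
have [k [q]] := multiplicity_XsubC p 0; rewrite monic_neq0 //= subr0 => q0 Dp.
have qm0 : (map_poly iF q).[m] = 0.
  apply/eqP; move: pm0; rewrite /root Dp rmorphM /= map_polyXn hornerM hornerXn.
  by rewrite mulf_eq0 expf_eq0 (negPf m0) andbF orbF.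
(* The constant term of [q] is a nonzero multiple of [m]. *)
have /factor_theorem[r Dq] : root (q - (q`_0)%:P) 0.
  by rewrite /root hornerD hornerN hornerC horner_coef0 subrr.
have /(congr1 (fun s => (map_poly iF s).[m])) := Dq.
rewrite subr0 rmorphB /= map_polyC hornerD hornerN hornerC qm0 sub0r rmorphM /= map_polyX.
rewrite hornerM hornerX => /eqP; rewrite eqr_oppLR mulrC -mulrN => /eqP Dq0.
have intFs : intF (- (map_poly iF r).[m]) by apply/intFN/intF_horner.
move: q0; rewrite /root horner_coef0.
case: (q`_0) Dq0 => [[|n]|n] Dq0 // _.
  by exists n; exists (- (map_poly iF r).[m]).
exists n; exists (- - (map_poly iF r).[m]); first exact: intFN.
by rewrite mulrN -Dq0 NegzE mulrNz opprK.
Qed.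

End PrincipalIdeals.

Lemma nat_fun_collision (T : finType) (f : nat -> T) :
  exists m1 m2, (m1 < m2)%N /\ f m1 = f m2.
Proof.
pose g (i : 'I_#|T|.+1) := f i.
have /injectivePn[i [j ij gij]] : ~~ injectiveb g.
  by apply/injectiveP => /leq_card; rewrite card_ord ltnn.
have [lt_ij|lt_ji|eq_ij] := ltngtP i j.
- by exists i, j.
- by exists j, i.
- by move: ij; rewrite -val_eqE /= eq_ij eqxx.
Qed.

Lemma eq_inord_modz_dvdz (n : nat) (x y : int) :
  inord `|(x %% n.+1)%Z|%N = inord `|(y %% n.+1)%Z|%N :> 'I_n.+1 ->
  (n.+1%:Z %| x - y)%Z.
Proof.
have n_gt0 : (0 < n.+1%:Z)%R by [].
have := ltz_pmod x n_gt0; have := modz_ge0 x (lt0r_neq0 n_gt0).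
have := ltz_pmod y n_gt0; have := modz_ge0 y (lt0r_neq0 n_gt0).
move=> y_ge0 y_lt x_ge0 x_lt /(congr1 (@nat_of_ord _)).
rewrite !inordK; [|lia|lia] => exy.
by rewrite -eqz_mod_dvd; apply/eqP; lia.
Qed.

Section PowersModN.
Variable F : fieldExtType rat.
Local Notation iF := (intr : int -> F).

Lemma dvdR_horner (N : int) (q : {poly int}) (a : F) : intF a ->
  (forall i, (N %| q`_i)%Z) -> dvdR N%:~R (map_poly iF q).[a].
Proof.
move=> ha Ndvd; rewrite (horner_coef_wide _ (size_poly _ _)).
exists (\sum_(i < size q) ((q`_i %/ N)%Z)%:~R * a ^+ i).
  by apply: intF_sum => i _; apply/intFM/intFX => //; apply: intF_intr.
rewrite mulr_sumr; apply: eq_bigr => i _.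
by rewrite coef_map /= -[in LHS](divzK (Ndvd i)) intrM; ring.
Qed.

Import Pdiv.Ring Pdiv.RingMonic.

(* [a ^+ m] is the value at [a] of the remainder of ['X^m] by the monic polynomial of [a],
   and the coefficients of these remainders take finitely many values modulo [n.+1]. *)
Lemma exists_pow_congr_mod (a : F) (n : nat) : intF a ->
  exists m1 m2, (m1 < m2)%N /\ dvdR n.+1%:R (a ^+ m1 - a ^+ m2).
Proof.
move=> ha; case: (ha) => p p_monic pa0; pose r m := rmodp 'X^m p.
have powE m : a ^+ m = (map_poly iF (r m)).[a].
  rewrite -[in LHS](hornerXn a m) -(map_polyXn iF) {1}(rdivp_eq p_monic 'X^m).
  by rewrite rmorphD rmorphM /= hornerD hornerM (eqP pa0) mulr0 add0r.
pose res m := [ffun i : 'I_(size p) => inord `|((r m)`_i %% n.+1)%Z|%N : 'I_n.+1].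
have [m1 [m2 [lt_m12 res12]]] := nat_fun_collision res.
exists m1, m2; split => //.
rewrite !powE -hornerN -hornerD -rmorphB /=.
apply: (dvdR_horner (N := n.+1) ha) => i; rewrite coefB.
have [lt_ip|le_pi] := ltnP i (size p).
  apply: eq_inord_modz_dvdz.
  by move/ffunP/(_ (Ordinal lt_ip)): res12; rewrite !ffunE.
have size_r m : (size (r m) <= i)%N.
  by apply: leq_trans le_pi; apply/ltnW/ltn_rmodpN0/monic_neq0.
by rewrite !nth_default ?size_r // subrr dvdz0.
Qed.

Lemma exists_pow_idempotent_mod (a : F) (n : nat) : intF a ->
  exists2 K, (0 < K)%N & dvdR n.+1%:R (a ^+ K - (a ^+ K) ^+ 2).
Proof.
move=> ha; have [m1 [m2 [lt_m12 dvd12]]] := exists_pow_congr_mod n ha.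
have sm := dvdR_submod (n.+1%:R : F).
have [p p_gt0 Dm2] : exists2 p, (0 < p)%N & m2 = (m1 + p)%N.
  by exists (m2 - m1)%N; lia.
have period q : dvdR n.+1%:R (a ^+ m1 - a ^+ (m1 + q * p)).
  elim: q => [|q IHq]; first by rewrite mul0n addn0 subrr; apply: submod0.
  have -> : a ^+ m1 - a ^+ (m1 + q.+1 * p)
          = (a ^+ m1 - a ^+ (m1 + q * p)) + a ^+ (q * p) * (a ^+ m1 - a ^+ m2).
    by rewrite Dm2 mulSnr addnA !exprD; ring.
  by apply: submodD => //; apply: submodMl => //; apply: intFX.
exists (m1.+1 * p)%N; first by rewrite muln_gt0.
rewrite -exprM muln2 -addnn; set K := (m1.+1 * p)%N; have [K' DK] : exists K', K = (K' + m1)%N.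
  by exists (K - m1)%N; rewrite /K; nia.
have -> : a ^+ K - a ^+ (K + K) = a ^+ K' * (a ^+ m1 - a ^+ (m1 + K)).
  by rewrite mulrBr -!exprD addnA -DK.
by apply: (submodMl sm); [apply: intFX | apply: period].
Qed.

End PowersModN.

Section Lifting.
Variables (F : fieldExtType rat) (J Jh I : F -> Prop).
Hypotheses (smJ : Rsubmodule J) (smJh : Rsubmodule Jh) (smI : Rsubmodule I).
Hypothesis JJh_int : subset_ideal (prod_ideal J Jh) (@intF F).
Hypothesis I_int : subset_ideal I (@intF F).

Lemma intF_mulJ x y : J x -> Jh y -> intF (x * y).
Proof. by move=> Jx Jhy; apply/JJh_int/prod_idealM. Qed.

Lemma exists_nonzero_upper_entry (a b c d i0 j0 : F) :
    I i0 -> i0 != 0 -> J j0 -> j0 != 0 -> J b -> Jh c -> I (a * d - b * c - 1) ->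
  exists b', [/\ J b', b' != 0, prod_ideal I J (b' - b) & I (a * d - b' * c - 1)].
Proof.
move=> Ii0 i0_neq0 Jj0 j0_neq0 Jb Jhc Ig.
case: (eqVneq b 0) Ig => [-> | b_neq0] Ig; last first.
  by exists b; split => //; rewrite subrr; apply: prod_ideal0.
exists (i0 * j0); split; first by apply: submodMl => //; apply: I_int.
- by rewrite mulf_neq0.
- by rewrite subr0; apply: prod_idealM.
have -> : a * d - i0 * j0 * c - 1 = (a * d - 0 * c - 1) - (j0 * c) * i0 by ring.
by apply: submodB => //; apply: submodMl => //; apply: intF_mulJ.
Qed.

Lemma exists_pow_idempotent_mod_mulJh (a b h0 : F) :
    intF a -> J b -> b != 0 -> Jh h0 -> h0 != 0 ->
  exists2 K, (0 < K)%N & exists2 t, Jh t & a ^+ K - (a ^+ K) ^+ 2 = b * t.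
Proof.
move=> ha Jb b_neq0 Jhh0 h0_neq0.
have [n [s hs Dn]] := dvdR_nat_of_neq0 (mulf_neq0 b_neq0 h0_neq0) (intF_mulJ Jb Jhh0).
have [K K_gt0 [z hz Dz]] := exists_pow_idempotent_mod n ha.
exists K => //; exists (h0 * s * z).
  by apply: (submodMr smJh) => //; apply: (submodMr smJh).
by rewrite Dz Dn !mulrA.
Qed.

Lemma exists_unimodular_lift (a b c d h0 : F) :
    intF a -> intF d -> J b -> b != 0 -> Jh c -> Jh h0 -> h0 != 0 ->
    I (a * d - b * c - 1) ->
  exists a' v h, [/\ I (a' - a), intF a', intF v, Jh h & a' * v - b * h = 1].
Proof.
move=> ha hd Jb b_neq0 Jhc Jhh0 h0_neq0 Ig.
have [K K_gt0 [t Jht Et]] := exists_pow_idempotent_mod_mulJh ha Jb b_neq0 Jhh0 h0_neq0.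
pose E := a ^+ K; pose P := a ^+ K.-1; pose Q := (d - 1) ^+ K.
pose W := \sum_(k < K) (a * (d - 1)) ^+ k.
have DE : E = a * P by rewrite /E /P -exprS prednK.
have DW : (1 + a * (1 - d)) * W = 1 - E * Q.
  have := subrX1 (a * (d - 1)) K; rewrite exprMn -/E -/Q -/W => DEQ.
  by rewrite -[1 - E * Q]opprB DEQ; ring.
have hE : intF E by apply: intFX.
have hP : intF P by apply: intFX.
have hQ : intF Q by apply/intFX/intFB/intF1.
have h1E : intF (1 - E) by apply/intFB/hE/intF1.
have hW : intF W by apply: intF_sum => k _; apply/intFX/intFM/intFB/intF1.
pose g := a * d - b * c - 1.
have hg : intF g by apply: I_int.
exists (a - g * (1 - E)), (P * E + (1 - E) * W).
exists (t * (- 1 - g * P - Q + W * g) + c * ((1 - E) * W)); split.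
- by rewrite addrAC subrr add0r; apply/(submodN smI)/(submodMr smI).
- by apply/intFB/intFM.
- by apply: intFD; apply: intFM.
- apply: (submodD smJh); apply: (submodMr smJh) => //; last exact: intFM.
  apply: intFD; last exact: intFM.
  by apply: intFB => //; apply: intFB; [apply/intFN/intF1 | apply: intFM].
- exact: idempotent_unit_identity.
Qed.

End Lifting.

Theorem lemma7p4 (F : fieldExtType rat) (J Jh I : F -> Prop) :
  totally_real F ->
  frac_ideal J -> frac_ideal Jh ->
  subset_ideal (prod_ideal J Jh) (@intF F) ->
  nz_ideal I ->
  subset_ideal I (prod_ideal J Jh) ->
  forall B : 'M[F]_2, Gammabar_lift I J Jh B ->
  exists A : 'M[F]_2, Gamma J Jh A /\ reduces_to I J Jh A B.
Proof.
move=> _ [smJ [j0 [Jj0 j0_neq0]] _] [smJh [h0 [Jhh0 h0_neq0]] _] JJh_int.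
move=> [[smI [i0 [Ii0 i0_neq0]] _] I_int] _ B [ha hd Jb Jhc Idet].
have [b [Jb' b_neq0 Ib Idet']] :=
  exists_nonzero_upper_entry smJ smI JJh_int I_int Ii0 i0_neq0 Jj0 j0_neq0 Jb Jhc Idet.
have [a [v [h [Ia ha' hv Jhh avbh]]]] :=
  exists_unimodular_lift smJh smI JJh_int I_int ha hd Jb' b_neq0 Jhc Jhh0 h0_neq0 Idet'.
have [det1 Dd Dc] := unimodular_row_completion (B 1 0) (B 1 1) avbh.
set y := h * B 1 1 - v * B 1 0 in det1 Dd Dc.
set g := a * B 1 1 - b * B 1 0 - 1 in Dd Dc.
have Ig : I g.
  have -> : g = (B 0 0 * B 1 1 - b * B 1 0 - 1) + (a - B 0 0) * B 1 1 by rewrite /g; ring.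
  by apply: (submodD smI) => //; apply: (submodMr smI).
have Jhy : Jh y by apply: (submodB smJh); [apply: (submodMr smJh) | apply: (submodMl smJh)].
exists (mx22 a b (h - a * y) (v - b * y)); rewrite /Gamma /reduces_to det_mx22 !mxE /=.
split; split => //.
- have -> : v - b * y = v - (b * h) * B 1 1 + v * (b * B 1 0) by rewrite /y; ring.
  apply: intFD; last by apply: intFM => //; apply: (intF_mulJ JJh_int).
  by apply: intFB => //; apply: intFM => //; apply: (intF_mulJ JJh_int).
- by apply: (submodB smJh) => //; apply: (submodMl smJh).
- by rewrite Dd; apply: (submodN smI); apply: (submodMl smI).
- by rewrite Dc; apply: prod_idealM Jhh; apply: (submodN smI).
Qed.
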